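(* Let $A$ be a subring of a prime ring $B$ that is left or right Goldie, and let $t$ be the Goldie rank of $B$. Let $N$ be the prime radical of $A$. Then $N^t=0$.
   Context: The prime radical of a ring is the intersection of its prime ideals. The Goldie rank of a prime left (or right) Goldie ring is the length of its (simple artinian) Goldie quotient ring as a module over itself. *)

From HB Require Import structures.
From mathcomp Require Import all_boot all_order all_algebra.
Set Implicit Arguments. Unset Strict Implicit. Unset Printing Implicit Defensive.
Import GRing.Theory.
Local Open Scope ring_scope.

Section RingDefs.
Variable R : nzRingType.

Definition subring (A : R -> Prop) : Prop :=
  A 1 /\ (forall x y, A x -> A y -> A (x - y)) /\ (forall x y, A x -> A y -> A (x * y)).

Definition ideal (A I : R -> Prop) : Prop :=
  (forall x, I x -> A x) /\ I 0 /\
  (forall x y, I x -> I y -> I (x - y)) /\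
  (forall a x, A a -> I x -> I (a * x) /\ I (x * a)).

Definition subset (I J : R -> Prop) : Prop := forall x, I x -> J x.

Inductive ideal_mul (I J : R -> Prop) : R -> Prop :=
  | im_prod x y : I x -> J y -> ideal_mul I J (x * y)
  | im_0 : ideal_mul I J 0
  | im_add u v : ideal_mul I J u -> ideal_mul I J v -> ideal_mul I J (u + v).

Definition prime_ideal (A P : R -> Prop) : Prop :=
  ideal A P /\ (exists a, A a /\ ~ P a) /\
  (forall I J, ideal A I -> ideal A J -> subset (ideal_mul I J) P ->
     subset I P \/ subset J P).

Definition prime_radical (A : R -> Prop) : R -> Prop :=
  fun x => A x /\ forall P, prime_ideal A P -> P x.

Fixpoint ideal_pow (A I : R -> Prop) (n : nat) : R -> Prop :=
  match n with
  | O => A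
  | S m => ideal_mul (ideal_pow A I m) I
  end.

Definition whole : R -> Prop := fun _ => True.

Definition prime_ring : Prop := prime_ideal whole (fun x => x = 0).

Definition left_ideal (L : R -> Prop) : Prop :=
  L 0 /\ (forall x y, L x -> L y -> L (x - y)) /\ (forall r x, L x -> L (r * x)).
Definition right_ideal (L : R -> Prop) : Prop :=
  L 0 /\ (forall x y, L x -> L y -> L (x - y)) /\ (forall r x, L x -> L (x * r)).

Definition lann (S : R -> Prop) : R -> Prop := fun r => forall s, S s -> r * s = 0.
Definition rann (S : R -> Prop) : R -> Prop := fun r => forall s, S s -> s * r = 0.

Definition same_set (I J : R -> Prop) : Prop := forall x, I x <-> J x.

Definition acc_lann : Prop :=
  forall S : nat -> (R -> Prop),
    (forall n, subset (lann (S n)) (lann (S n.+1))) ->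
    exists n, forall m, (n <= m)%N -> same_set (lann (S m)) (lann (S n)).
Definition acc_rann : Prop :=
  forall S : nat -> (R -> Prop),
    (forall n, subset (rann (S n)) (rann (S n.+1))) ->
    exists n, forall m, (n <= m)%N -> same_set (rann (S m)) (rann (S n)).

Definition independent (L : nat -> (R -> Prop)) : Prop :=
  forall (n : nat) (x : nat -> R), (forall i, L i (x i)) ->
    \sum_(i < n) x i = 0 -> forall i, (i < n)%N -> x i = 0.

Definition finite_udim_left : Prop :=
  ~ exists L : nat -> (R -> Prop),
      (forall i, left_ideal (L i)) /\ (forall i, exists x, L i x /\ x <> 0) /\ independent L.
Definition finite_udim_right : Prop :=
  ~ exists L : nat -> (R -> Prop),
      (forall i, right_ideal (L i)) /\ (forall i, exists x, L i x /\ x <> 0) /\ independent L.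

Definition left_goldie : Prop := acc_lann /\ finite_udim_left.
Definition right_goldie : Prop := acc_rann /\ finite_udim_right.

Definition regular (c : R) : Prop :=
  (forall x, c * x = 0 -> x = 0) /\ (forall x, x * c = 0 -> x = 0).

(* Composition length of R as a left (resp. right) module over itself:
   a chain 0 = L_0 < L_1 < ... < L_t = R of left (right) ideals with no
   left (right) ideal strictly between consecutive terms. *)
Definition strict_sub (I J : R -> Prop) : Prop := subset I J /\ ~ subset J I.

Definition left_length (t : nat) : Prop :=
  exists L : nat -> (R -> Prop),
    (forall i, left_ideal (L i)) /\ same_set (L 0%N) (fun x => x = 0) /\
    same_set (L t) whole /\
    (forall i, (i < t)%N -> strict_sub (L i) (L i.+1) /\
       forall M, left_ideal M -> subset (L i) M -> subset M (L i.+1) ->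
         same_set M (L i) \/ same_set M (L i.+1)).
Definition right_length (t : nat) : Prop :=
  exists L : nat -> (R -> Prop),
    (forall i, right_ideal (L i)) /\ same_set (L 0%N) (fun x => x = 0) /\
    same_set (L t) whole /\
    (forall i, (i < t)%N -> strict_sub (L i) (L i.+1) /\
       forall M, right_ideal M -> subset (L i) M -> subset M (L i.+1) ->
         same_set M (L i) \/ same_set M (L i.+1)).
End RingDefs.

(* Classical left (right) ring of quotients of B, given by an injective ring
   morphism f : B -> Q: images of regular elements are units of Q and every
   element of Q has the form f(c)^-1 f(a) (resp. f(a) f(c)^-1), c regular. *)
Definition left_quotient_ring (B Q : nzRingType) (f : {rmorphism B -> Q}) : Prop :=
  injective f /\
  (forall c, regular c -> exists u : Q, u * f c = 1 /\ f c * u = 1) /\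
  (forall q : Q, exists a c, regular c /\ f c * q = f a).
Definition right_quotient_ring (B Q : nzRingType) (f : {rmorphism B -> Q}) : Prop :=
  injective f /\
  (forall c, regular c -> exists u : Q, u * f c = 1 /\ f c * u = 1) /\
  (forall q : Q, exists a c, regular c /\ q * f c = f a).

(* t is the Goldie rank of the prime left (resp. right) Goldie ring B:
   the length of its Goldie quotient ring Q as a module over itself. *)
Definition goldie_rank (B : nzRingType) (t : nat) : Prop :=
  (left_goldie B /\ exists (Q : nzRingType) (f : {rmorphism B -> Q}),
      left_quotient_ring f /\ left_length Q t) \/
  (right_goldie B /\ exists (Q : nzRingType) (f : {rmorphism B -> Q}),
      right_quotient_ring f /\ right_length Q t).

From mathcomp Require Import all_boot all_order all_algebra.
From Stdlib Require Import Classical ClassicalEpsilon.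
From mathcomp Require Import zify.
Set Implicit Arguments. Unset Strict Implicit. Unset Printing Implicit Defensive.
Import GRing.Theory.
Local Open Scope ring_scope.

(** Let Q be the quotient ring of B, of length t.  Call a subset X of Q admissible if it is
   a right annihilator, X = r(l(X)), and is stable under left multiplication by A.  Since
   X |-> l(X) is injective and order reversing into left ideals, a strict chain of admissible
   sets has length at most t, so there is an unrefinable chain 0 = R_0 < ... < R_m containing 1,
   with m <= t.  For each j, {a in A | a R_{j+1} <= R_j} is a prime ideal of A: if IJ lies in
   it, the admissible closure of J R_{j+1} + R_j must be R_j or R_{j+1}.  Hence the prime
   radical N lies in each of these ideals, N^m R_m <= R_0 = 0, and N^t = 0. *)

Definition holds (P : Prop) : bool :=
  if excluded_middle_informative P then true else false.

Lemma holdsP (P : Prop) : reflect P (holds P).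
Proof. by rewrite /holds; case: excluded_middle_informative => h; constructor. Qed.

Lemma holds_mono (P P' : Prop) : (P -> P') -> (holds P <= holds P')%N.
Proof. by move=> PP'; case: holdsP => // /PP' /holdsP ->. Qed.

Lemma ex_maxn_prop (P : nat -> Prop) n t :
  P n -> (forall m, P m -> (m <= t)%N) -> exists m, P m /\ forall k, P k -> (k <= m)%N.
Proof.
move=> Pn Pt.
have exP : exists i, holds (P i) by exists n; apply/holdsP.
have ubP : forall i, holds (P i) -> (i <= t)%N by move=> i /holdsP; apply: Pt.
case: (ex_maxnP exP ubP) => m /holdsP Pm maxm.
by exists m; split=> // k Pk; apply: maxm; apply/holdsP.
Qed.

Definition image_pred (T U : Type) (f : T -> U) (X : T -> Prop) : U -> Prop :=
  fun u => exists x, X x /\ u = f x.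

Section Annihilators.
Variable Q : nzRingType.
Implicit Types S X Y L M : Q -> Prop.

Definition ann_closed X := subset (rann (lann X)) X.

Definition stable (As X : Q -> Prop) := forall a r, As a -> X r -> X (a * r).

Lemma sub_rann_lann X : subset X (rann (lann X)).
Proof. by move=> x Xx z /(_ x Xx). Qed.

Lemma lann_anti X Y : subset X Y -> subset (lann Y) (lann X).
Proof. by move=> XY z Hz s /XY; apply: Hz. Qed.

Lemma rann_anti X Y : subset X Y -> subset (rann Y) (rann X).
Proof. by move=> XY z Hz s /XY; apply: Hz. Qed.

Lemma rann_closed S : ann_closed (rann S).
Proof. by move=> y Hy s Ss; apply: Hy => z; apply. Qed.

Lemma ann_closed0 X : ann_closed X -> X 0.
Proof. by move=> cX; apply: cX => z _; rewrite mulr0. Qed.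

Lemma ann_closedB X x y : ann_closed X -> X x -> X y -> X (x - y).
Proof. by move=> cX Xx Xy; apply: cX => z Hz; rewrite mulrBr (Hz x) // (Hz y) // subr0. Qed.

Lemma ann_closedD X x y : ann_closed X -> X x -> X y -> X (x + y).
Proof. by move=> cX Xx Xy; apply: cX => z Hz; rewrite mulrDr (Hz x) // (Hz y) // addr0. Qed.

Lemma stable_rann_lann As X : stable As X -> stable As (rann (lann X)).
Proof.
move=> sX a y Aa Hy z Hz; rewrite mulrA; apply: Hy => s Xs.
by rewrite -mulrA; apply: Hz; apply: sX.
Qed.

Lemma lann_left_ideal S : left_ideal (lann S).
Proof.
split; first by move=> s _; rewrite mul0r.
split; first by move=> x y Hx Hy s Ss; rewrite mulrBl Hx // Hy // subr0.
by move=> r x Hx s Ss; rewrite -mulrA Hx // mulr0.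
Qed.

Lemma left_idealD L x y : left_ideal L -> L x -> L y -> L (x + y).
Proof.
case=> L0 [LB _] Lx Ly.
by have := LB x (0 - y) Lx (LB 0 y L0 Ly); rewrite sub0r opprK.
Qed.

Lemma left_idealI L M :
  left_ideal L -> left_ideal M -> left_ideal (fun x => L x /\ M x).
Proof.
move=> [L0 [LB LM]] [M0 [MB MM]]; split=> //.
by split=> [x y [? ?] [? ?]|r x [? ?]]; split; auto.
Qed.

Lemma left_ideal_sum L M :
  left_ideal L -> left_ideal M -> left_ideal (fun x => exists a b, L a /\ M b /\ x = a + b).
Proof.
move=> [L0 [LB LM]] [M0 [MB MM]]; split; first by exists 0, 0; rewrite addr0.
split=> [x y [a [b [La [Mb ->]]]] [a' [b' [La' [Mb' ->]]]]|r x [a [b [La [Mb ->]]]]].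
  by exists (a - a'), (b - b'); rewrite opprD addrACA; auto.
by exists (r * a), (r * b); rewrite mulrDr; auto.
Qed.

End Annihilators.

Section CompositionSeries.
Variables (Q : nzRingType) (t : nat) (L : nat -> Q -> Prop).
Hypothesis L_left_ideal : forall i, left_ideal (L i).
Hypothesis L0 : forall x, L 0%N x -> x = 0.
Hypothesis Lt : forall x, L t x.
Hypothesis L_sub : forall i, (i < t)%N -> subset (L i) (L i.+1).
Hypothesis L_max : forall i, (i < t)%N -> forall M, left_ideal M ->
  subset (L i) M -> subset M (L i.+1) -> same_set M (L i) \/ same_set M (L i.+1).

Definition meets_layer (M : Q -> Prop) k := exists x, M x /\ L k.+1 x /\ ~ L k x.

(* A Jordan-Hoelder measure: the number of composition factors L_{i+1}/L_i, i < k, met by M. *)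
Fixpoint layer_count M k : nat :=
  if k is k'.+1 then (layer_count M k' + holds (meets_layer M k'))%N else 0%N.

Lemma layer_count_le M k : (layer_count M k <= k)%N.
Proof. by elim: k => //= k IH; rewrite -addn1 leq_add // leq_b1. Qed.

Lemma meets_layer_sub M M' k : subset M M' -> meets_layer M k -> meets_layer M' k.
Proof. by move=> MM' [x [Mx Lx]]; exists x; split; first exact: MM'. Qed.

Lemma layer_count_mono M M' :
  subset M M' -> forall k, (layer_count M k <= layer_count M' k)%N.
Proof.
by move=> MM'; elim=> //= k IH; rewrite leq_add // holds_mono // => /meets_layer_sub; apply.
Qed.

(* Modular law: (M ∩ L_{k+1}) + L_k lies between L_k and L_{k+1} and differs from L_k,
   so it is L_{k+1}. *)
Lemma meets_layer_lift M M' k : (k < t)%N -> left_ideal M -> left_ideal M' -> subset M M' ->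
  meets_layer M k -> (forall x, M' x -> L k x -> M x) -> forall x, M' x -> L k.+1 x -> M x.
Proof.
move=> kt HM HM' MM' [m0 [Mm0 [Lm0 nLm0]]] subk x M'x Lx.
pose K y := exists a b, (M a /\ L k.+1 a) /\ L k b /\ y = a + b.
have HK : left_ideal K := left_ideal_sum (left_idealI HM (L_left_ideal k.+1)) (L_left_ideal k).
have LK : subset (L k) K.
  by move=> y Ly; exists 0, y; rewrite add0r; do !split=> //; [exact: HM.1 | exact: (L_left_ideal _).1].
have KL : subset K (L k.+1).
  by move=> y [a [b [[_ La] [Lb ->]]]]; apply: left_idealD => //; exact: L_sub.
have [eqK|eqK] := L_max kt HK LK KL.
  by case: nLm0; apply/eqK; exists m0, 0; rewrite addr0; do !split=> //; exact: (L_left_ideal _).1.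
have [a [b [[Ma _] [Lb def_x]]]] := proj2 (eqK x) Lx.
rewrite def_x in M'x *; apply: left_idealD => //; apply: subk Lb.
have -> : b = a + b - a by rewrite addrC addKr.
by apply: HM'.2.1 => //; exact: MM'.
Qed.

Lemma layer_count_eq_sub M M' : left_ideal M -> left_ideal M' -> subset M M' ->
  forall k, (k <= t)%N -> layer_count M k = layer_count M' k ->
  forall x, M' x -> L k x -> M x.
Proof.
move=> HM HM' MM'; elim=> [|k IH] kt /= eq_cnt x M'x Lx.
  by rewrite (L0 Lx); exact: HM.1.
have le_cnt := layer_count_mono MM' k.
have le_meets := holds_mono (@meets_layer_sub M M' k MM').
have eq_k : layer_count M k = layer_count M' k by lia.
have sub_k := IH (ltnW kt) eq_k.
have [Lkx|nLkx] := classic (L k x); first exact: sub_k.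
have meets : meets_layer M k.
  have /holdsP meets' : meets_layer M' k by exists x.
  by apply/holdsP; move: eq_cnt; rewrite eq_k meets' => /addnI; case: holds.
exact: meets_layer_lift kt HM HM' MM' meets sub_k x M'x Lx.
Qed.

Lemma layer_count_lt M M' : left_ideal M -> left_ideal M' -> strict_sub M M' ->
  (layer_count M t < layer_count M' t)%N.
Proof.
move=> HM HM' [MM' nM'M]; rewrite ltn_neqAle layer_count_mono // andbT.
apply/eqP => eq_cnt; apply: nM'M => x M'x.
exact: layer_count_eq_sub HM HM' MM' t (leqnn t) eq_cnt x M'x (Lt x).
Qed.

Lemma decreasing_chain_bound (M : nat -> Q -> Prop) m : (forall i, left_ideal (M i)) ->
  (forall i, (i < m)%N -> strict_sub (M i.+1) (M i)) -> (m <= t)%N.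
Proof.
move=> HM Mlt.
have bound i : (i <= m)%N -> (layer_count (M i) t + i <= layer_count (M 0%N) t)%N.
  elim: i => [|i IH] im; first by rewrite addn0.
  by have := layer_count_lt (HM _) (HM _) (Mlt i im); have := IH (ltnW im); lia.
by have := bound m (leqnn m); have := layer_count_le (M 0%N) t; lia.
Qed.

End CompositionSeries.

Lemma left_length_chain_bound (Q : nzRingType) t (M : nat -> Q -> Prop) m :
  left_length Q t -> (forall i, left_ideal (M i)) ->
  (forall i, (i < m)%N -> strict_sub (M i.+1) (M i)) -> (m <= t)%N.
Proof.
case=> L [HL [L0 [Lt Lst]]]; apply: (decreasing_chain_bound HL).
- by move=> x /L0.
- by move=> x; apply/Lt.
- by move=> i /Lst [[]].
- by move=> i /Lst [].
Qed.

Section StableChains.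
Variables (Q : nzRingType) (As : Q -> Prop).

Definition admissible (X : Q -> Prop) := ann_closed X /\ stable As X.

Definition stable_chain (R : nat -> Q -> Prop) m :=
  subset (R 0%N) (fun x => x = 0) /\ R m 1 /\ (forall i, admissible (R i)) /\
  (forall i, (i < m)%N -> strict_sub (R i) (R i.+1)).

Definition unrefinable (R : nat -> Q -> Prop) m :=
  forall j, (j < m)%N -> forall M, admissible M -> subset (R j) M -> subset M (R j.+1) ->
    subset M (R j) \/ subset (R j.+1) M.

(* Taking left annihilators turns the chain into a strictly decreasing chain of left ideals. *)
Lemma stable_chain_bound t R m : left_length Q t -> stable_chain R m -> (m <= t)%N.
Proof.
move=> Qt [_ [_ [adm Rlt]]].
apply: (left_length_chain_bound (M := fun i => lann (R i))) Qt _ _ => [i|i im].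
  exact: lann_left_ideal.
have [RR' nR'R] := Rlt i im; split; first exact: lann_anti.
move=> lann_sub; apply: nR'R => x Rx; apply: (adm i).1.
by apply: (rann_anti lann_sub); apply: sub_rann_lann.
Qed.

Lemma zero_admissible : admissible (fun x : Q => x = 0).
Proof.
split; last by move=> a r _ ->; rewrite mulr0.
by move=> y /(_ 1); rewrite mul1r; apply=> s ->; rewrite mulr0.
Qed.

Lemma trivial_stable_chain :
  stable_chain (fun i => if i is 0%N then (fun x : Q => x = 0) else @whole Q) 1.
Proof.
split=> //; split=> //; split; first by case=> [|i] //; exact: zero_admissible.
case=> // _; split=> // /(_ 1 I) /eqP; by rewrite oner_eq0.
Qed.

Lemma stable_chain_refine R m j M : stable_chain R m -> (j < m)%N -> admissible M ->
  strict_sub (R j) M -> strict_sub M (R j.+1) ->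
  stable_chain (fun k => if (k <= j)%N then R k else if k == j.+1 then M else R k.-1) m.+1.
Proof.
move=> [R_zero [Rm [adm Rlt]]] jm admM RM MR.
split=> //; split.
  have -> : (m.+1 <= j)%N = false by lia.
  by have -> : (m.+1 == j.+1) = false by lia.
split; first by move=> i; case: ifP => _ //; case: ifP.
move=> i im; case: (ltngtP i j) => [ij|ji|->] /=; last by rewrite eqxx.
  by apply: Rlt; apply: ltn_trans jm.
have -> : (i.+1 == j.+1) = false by lia.
case: eqVneq => [->|ne]; first by [].
by have := Rlt i.-1; rewrite prednK; [apply; lia | lia].
Qed.

Lemma exists_unrefinable_chain t : left_length Q t ->
  exists m R, (m <= t)%N /\ stable_chain R m /\ unrefinable R m.
Proof.
move=> Qt.
have [m [[R chR] maxm]] := ex_maxn_prop (P := fun m => exists R, stable_chain R m)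
  (ex_intro (stable_chain^~ 1%N) _ trivial_stable_chain)
  (fun m '(ex_intro R chR) => stable_chain_bound Qt chR).
exists m, R; split; first exact: stable_chain_bound Qt chR.
split=> // j jm M admM RM MR.
apply: NNPP => /not_or_and [nMR nRM].
have chR' := stable_chain_refine chR jm admM (conj RM nMR) (conj MR nRM).
by have := maxm m.+1 (ex_intro (stable_chain^~ m.+1) _ chR'); rewrite ltnn.
Qed.

Lemma unrefinable_layer_prime R m j : stable_chain R m -> unrefinable R m -> (j < m)%N ->
  forall I J : Q -> Prop, subset I As -> subset J As -> stable As J ->
  (forall i b r, I i -> J b -> R j.+1 r -> R j (i * b * r)) ->
  (forall b r, J b -> R j.+1 r -> R j (b * r)) \/ (forall i r, I i -> R j.+1 r -> R j (i * r)).
Proof.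
move=> [_ [_ [adm Rlt]]] unref jm I J IAs JAs sJ IJR.
pose S q := (exists b r, J b /\ R j.+1 r /\ q = b * r) \/ R j q.
have sS : stable As S.
  move=> a q Aa [[b [r [Jb [Rr ->]]]]|Rq]; last by right; exact: (adm j).2.
  by left; exists (a * b), r; rewrite mulrA; split=> //; apply: sJ.
have SR : subset S (R j.+1).
  move=> q [[b [r [Jb [Rr ->]]]]|Rq]; first exact: (adm j.+1).2 (JAs b Jb) Rr.
  exact: (Rlt j jm).1.
have admM : admissible (rann (lann S)) := conj (@rann_closed _ _) (stable_rann_lann sS).
have RM : subset (R j) (rann (lann S)) by move=> x Rx; apply: sub_rann_lann; right.
have MR : subset (rann (lann S)) (R j.+1).
  by move=> x Sx; apply: (adm j.+1).1; apply: (rann_anti (lann_anti SR)).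
case: (unref j jm _ admM RM MR) => [MRj|RjM]; [left|right].
  by move=> b r Jb Rr; apply: MRj; apply: sub_rann_lann; left; exists b, r.
move=> i r Ii Rr; apply: (adm j).1 => z Hz; rewrite mulrA.
apply: (RjM r Rr) => s [[b [r' [Jb [Rr' ->]]]]|Rs].
  by rewrite -mulrA [i * _]mulrA; apply: Hz; apply: IJR.
by rewrite -mulrA; apply: Hz; exact: (adm j).2 (IAs i Ii) Rs.
Qed.

End StableChains.

Lemma ideal_pow_sub (R : nzRingType) (A N : R -> Prop) (S : nat -> R -> Prop) :
  (forall k, S k 0) -> (forall k x y, S k x -> S k y -> S k (x + y)) ->
  (forall k l x y, S k x -> S l y -> S (k + l)%N (x * y)) ->
  subset A (S 0%N) -> subset N (S 1%N) -> forall k, subset (ideal_pow A N k) (S k).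
Proof.
move=> S0 SD SM AS NS; elim=> //= k IH x.
elim=> [y n /IH Sy /NS Sn | | u v _ Su _ Sv]; last exact: SD.
  by rewrite -addn1; apply: SM.
exact: S0.
Qed.

Lemma subring0 (R : nzRingType) (A : R -> Prop) : subring A -> A 0.
Proof. by case=> A1 [AB _]; have := AB 1 1 A1 A1; rewrite subrr. Qed.

Section LayerIdeals.
Variables (B Q : nzRingType) (phi : {additive B -> Q}) (A : B -> Prop).
Hypothesis phi1 : phi 1 = 1.
Hypothesis phiM :
  (forall x y, phi (x * y) = phi x * phi y) \/ (forall x y, phi (x * y) = phi y * phi x).
Hypothesis A_subring : subring A.
Variables (R : nat -> Q -> Prop) (m : nat).
Hypothesis R_chain : stable_chain (image_pred phi A) R m.
Hypothesis R_unrefinable : unrefinable (image_pred phi A) R m.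

Definition layer_ideal j : B -> Prop := fun x => A x /\ forall r, R j.+1 r -> R j (phi x * r).

Lemma chain_closed j : ann_closed (R j).
Proof. by have [_ [_ [adm _]]] := R_chain; exact: (adm j).1. Qed.

Lemma chain0 j : R j 0.
Proof. exact: ann_closed0 (@chain_closed j). Qed.

Lemma chainD j x y : R j x -> R j y -> R j (x + y).
Proof. exact: ann_closedD (@chain_closed j). Qed.

Lemma chainB j x y : R j x -> R j y -> R j (x - y).
Proof. exact: ann_closedB (@chain_closed j). Qed.

Lemma chain_stable j a r : A a -> R j r -> R j (phi a * r).
Proof. by have [_ [_ [adm _]]] := R_chain => Aa; apply: (adm j).2; exists a. Qed.

Lemma layer_ideal_ideal j : ideal A (layer_ideal j).
Proof.
have [_ [AB AM]] := A_subring.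
split; first by move=> x [].
split; first by split=> [|r _]; [exact: subring0 A_subring | rewrite raddf0 mul0r; exact: chain0].
split=> [x y [Ax Hx] [Ay Hy]|a x Aa [Ax Hx]].
  by split=> [|r Rr]; [exact: AB | rewrite raddfB mulrBl; apply: chainB; auto].
split; split=> [|r Rr]; try exact: AM; case: phiM => ->; rewrite -mulrA;
  first [by apply: chain_stable => //; apply: Hx | by apply: Hx; apply: chain_stable].
Qed.

Lemma image_ideal_dichotomy j : (j < m)%N -> forall I J : B -> Prop,
  subset I A -> subset J A -> stable (image_pred phi A) (image_pred phi J) ->
  (forall i b r, I i -> J b -> R j.+1 r -> R j (phi i * phi b * r)) ->
  subset I (layer_ideal j) \/ subset J (layer_ideal j).
Proof.
move=> jm I J IA JA sJ IJR.
have IAs : subset (image_pred phi I) (image_pred phi A) by move=> _ [i [Ii ->]]; exists i; auto.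
have JAs : subset (image_pred phi J) (image_pred phi A) by move=> _ [b [Jb ->]]; exists b; auto.
have IJR' : forall i b r, image_pred phi I i -> image_pred phi J b -> R j.+1 r -> R j (i * b * r).
  by move=> _ _ r [i [Ii ->]] [b [Jb ->]]; apply: IJR.
case: (unrefinable_layer_prime R_chain R_unrefinable jm IAs JAs sJ IJR') => [JR|IR]; [right|left].
  by move=> b Jb; split; [exact: JA | move=> r; apply: JR; exists b].
by move=> i Ii; split; [exact: IA | move=> r; apply: IR; exists i].
Qed.

Lemma layer_ideal_prime j : (j < m)%N -> prime_ideal A (layer_ideal j).
Proof.
move=> jm; split; first exact: layer_ideal_ideal.
split.
  have [_ [_ [_ Rlt]]] := R_chain; have [_ not_sub] := Rlt j jm.
  exists 1; split; first exact: A_subring.1.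
  by move=> [_ R1]; apply: not_sub => x /R1; rewrite phi1 mul1r.
move=> I J [IA [_ [_ IM]]] [JA [_ [_ JM]]] IJP.
have IJR i b r : I i -> J b -> R j.+1 r -> R j (phi (i * b) * r).
  by move=> Ii Jb; apply: (IJP _ (im_prod Ii Jb)).2.
case: phiM => phiM'.
  apply: image_ideal_dichotomy => // [_ _ [a [Aa ->]] [b [Jb ->]]|i b r Ii Jb Rr].
    by exists (a * b); rewrite phiM'; split=> //; exact: (JM a b Aa Jb).1.
  by rewrite -phiM'; apply: IJR.
rewrite or_comm; apply: image_ideal_dichotomy => // [_ _ [a [Aa ->]] [i [Ii ->]]|b i r Jb Ii Rr].
  by exists (i * a); rewrite phiM'; split=> //; exact: (IM a i Aa Ii).2.
by rewrite -phiM'; apply: IJR.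
Qed.

Definition layer_shift k (y : B) :=
  forall j r, (j <= m)%N -> R j r -> R (j - k) (phi y * r).

Lemma prime_radical_pow_shift k : subset (ideal_pow A (prime_radical A) k) (layer_shift k).
Proof.
apply: ideal_pow_sub.
- by move=> k' j r _ _; rewrite raddf0 mul0r; apply: chain0.
- by move=> k' x y Sx Sy j r jm Rr; rewrite raddfD mulrDl; apply: chainD; [apply: Sx | apply: Sy].
- move=> k' l x y Sx Sy j r jm Rr; case: phiM => ->; rewrite -mulrA.
    by rewrite addnC subnDA; apply: Sx (Sy _ _ jm Rr); lia.
  by rewrite subnDA; apply: Sy (Sx _ _ jm Rr); lia.
- by move=> a Aa j r _ Rr; rewrite subn0; apply: chain_stable.
move=> n [_ Nn] [|j] r jm Rr.
  by have [R_zero _] := R_chain; rewrite (R_zero r Rr) mulr0; apply: chain0.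
by rewrite subn1; apply: (Nn _ (layer_ideal_prime jm)).2.
Qed.

Lemma prime_radical_pow_image_eq0 t x :
  (m <= t)%N -> ideal_pow A (prime_radical A) t x -> phi x = 0.
Proof.
move=> mt /prime_radical_pow_shift /(_ m 1 (leqnn m)).
have [R_zero [Rm _]] := R_chain; move=> /(_ Rm).
have -> : (m - t = 0)%N by lia.
by rewrite mulr1 => /R_zero.
Qed.

End LayerIdeals.

Theorem prime_radical_pow_eq0 (B Q : nzRingType) (phi : {additive B -> Q}) (A : B -> Prop) t :
  phi 1 = 1 ->
  (forall x y, phi (x * y) = phi x * phi y) \/ (forall x y, phi (x * y) = phi y * phi x) ->
  injective phi -> subring A -> left_length Q t ->
  forall x, ideal_pow A (prime_radical A) t x -> x = 0.
Proof.
move=> phi1 phiM phi_inj A_subring Qt x Nx.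
have [m [R [mt [R_chain R_unref]]]] := exists_unrefinable_chain (image_pred phi A) Qt.
apply: phi_inj; rewrite raddf0.
exact (prime_radical_pow_image_eq0 phi1 phiM A_subring R_chain R_unref mt Nx).
Qed.

Unset Implicit Arguments. Set Strict Implicit. Set Printing Implicit Defensive.

Theorem lemma2p8 (B : nzRingType) (A : B -> Prop) (t : nat) :
  prime_ring B -> subring A -> goldie_rank B t ->
  forall x : B, ideal_pow A (prime_radical A) t x -> x = 0.
Proof.
move=> _ A_subring [[_ [Q [f [[f_inj _] Qt]]]] | [_ [Q [f [[f_inj _] Qt]]]]].
  apply: (prime_radical_pow_eq0 (phi := f)) f_inj A_subring Qt; first exact: rmorph1.
  by left; exact: rmorphM.
(* A right quotient ring of finite right length is a left one of the opposite ring. *)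
apply: (prime_radical_pow_eq0 (Q := Q^c) (phi := f)) f_inj A_subring Qt.
  by rewrite /= rmorph1.
by right=> x y; rewrite /= rmorphM.
Qed.
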